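(* Let $\Omega$ be a finite set, $(H_i\mid i\in\Omega)$ finite abelian groups with $|H_i|=|H_l|\geqslant 3$ for all $i,l\in\Omega$, $\mathbf{H}=\prod_{i\in\Omega}H_i$, and $\mathbf{P}=(\Omega,\preccurlyeq_{\mathbf{P}})$ a poset. Let $\Lambda$ be the dual partition of $\mathcal{Q}(\mathbf{H},\mathbf{P})$. Then $\Lambda$ is finer than $\mathcal{Q}(\hat{\mathbf{H}},\overline{\mathbf{P}})$, i.e., every block of $\Lambda$ is contained in some block of $\mathcal{Q}(\hat{\mathbf{H}},\overline{\mathbf{P}})$.
   Context: $\hat{\mathbf{H}}$ is the character group of $\mathbf{H}$, identified with $\prod_{i}\hat{H_i}$ via $\alpha(\beta)=\prod_i\alpha_{(i)}(\beta_{(i)})$. For a codeword $\beta$ (in $\mathbf{H}$ or $\hat{\mathbf{H}}$), $\mathrm{supp}(\beta)$ is the set of coordinates $i$ where $\beta_{(i)}$ is not the identity. For $B\subseteq\Omega$, $\langle B\rangle_{\mathbf{P}}=\{a:\exists b\in B, a\preccurlyeq_{\mathbf{P}}b\}$, and $\mathrm{wt}_{\mathbf{P}}(\beta)=|\langle\mathrm{supp}(\beta)\rangle_{\mathbf{P}}|$. $\mathcal{Q}(\mathbf{H},\mathbf{P})$ is the partition of $\mathbf{H}$ into classes of equal $\mathbf{P}$-weight; $\mathcal{Q}(\hat{\mathbf{H}},\overline{\mathbf{P}})$ is the partition of $\hat{\mathbf{H}}$ into classes of equal $\overline{\mathbf{P}}$-weight, where $\overline{\mathbf{P}}$ is the dual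 poset ($u\preccurlyeq_{\overline{\mathbf{P}}}v\iff v\preccurlyeq_{\mathbf{P}}u$). The dual partition of a partition $\Gamma$ of $\mathbf{H}$ is the partition of $\hat{\mathbf{H}}$ in which $\chi,\psi$ lie in the same block iff $\sum_{b\in B}\chi(b)=\sum_{b\in B}\psi(b)$ for every block $B\in\Gamma$. *)

From HB Require Import structures.
From mathcomp Require Import all_boot all_order all_algebra all_field.
Set Implicit Arguments. Unset Strict Implicit. Unset Printing Implicit Defensive.
Import GRing.Theory.
Local Open Scope ring_scope.

Section PosetWeights.
Variables (Omega : finType) (H : Omega -> finZmodType).

(* the group H = prod_i H_i, written as dependent finite functions *)
Definition codeword := {dffun forall i : Omega, H i}.

Definition is_character (G : finZmodType) (f : G -> algC) : Prop :=
  f 0 = 1 /\ forall a b : G, f (a + b) = f a * f b.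

(* elements of hat H, identified with tuples of characters of the H_i *)
Definition chartuple := forall i : Omega, H i -> algC.

Definition is_chartuple (alpha : chartuple) : Prop :=
  forall i, is_character (alpha i).

Definition char_eval (alpha : chartuple) (beta : codeword) : algC :=
  \prod_(i : Omega) alpha i (beta i).

Definition supp (beta : codeword) : {set Omega} := [set i | beta i != 0].

Definition char_supp (alpha : chartuple) : {set Omega} :=
  [set i | [exists x : H i, alpha i x != 1]].

End PosetWeights.

Definition ideal (Omega : finType) (le : rel Omega) (B : {set Omega}) : {set Omega} :=
  [set a | [exists b in B, le a b]].

Definition dual_rel (Omega : finType) (le : rel Omega) : rel Omega :=
  fun u v => le v u.

Definition is_poset (Omega : finType) (le : rel Omega) : Prop :=
  reflexive le /\ antisymmetric le /\ transitive le.

Definition wtP (Omega : finType) (H : Omega -> finZmodType) (le : rel Omega)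
  (beta : codeword H) : nat := #|ideal le (supp beta)|.

Definition wtPbar_char (Omega : finType) (H : Omega -> finZmodType) (le : rel Omega)
  (alpha : chartuple H) : nat := #|ideal (dual_rel le) (char_supp alpha)|.

From HB Require Import structures.
From mathcomp Require Import all_boot all_order all_algebra all_field.
Set Implicit Arguments. Unset Strict Implicit. Unset Printing Implicit Defensive.
Import GRing.Theory Num.Theory.
Local Open Scope ring_scope.

(* Sort the codewords by the down-set [I] generated by their support.  For a
   down-set [I], the codewords generating [I] are those nonzero on the maximal
   elements of [I] and zero outside [I]: a product set, so the character sum of
   [chi] over them factors over the coordinates.  A non-maximal coordinate of
   [I] where [chi] is nontrivial contributes a full character sum, hence 0.
   Therefore the largest down-set with a nonzero class sum is the set [F] of
   points with no point of [T = supp chi] strictly below them, and its class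
   sum has absolute value (q-1)^y q^x, where q = |H_i|, x = |F \ max F| and
   y = |max F \ T|.  So the P-weight sums of [chi] determine |F|, hence
   (q-1)^y q^x, hence (as q >= 3) x and y; and x + y is |Omega| minus the
   size of the up-set generated by [T], which is the Pbar-weight of [chi]. *)

Section DependentProducts.
Variables (R : comPzSemiRingType) (I : finType) (T_ : I -> finType).

Lemma sum_dffun_prod (F : forall i, T_ i -> R) :
  \sum_(f : {dffun forall i, T_ i}) \prod_i F i (f i) = \prod_i \sum_(x : T_ i) F i x.
Proof.
pose G i := [ffun x : T_ i => F i x].
rewrite (reindex (@dffun_of_fprod I T_)) /=; last exact/onW_bij/dffun_of_fprod_bij.
transitivity (\sum_(t : fprod T_) \prod_(i in I) G i (t i)).
  by apply: eq_bigr => t _; apply: eq_bigr => i _; rewrite !ffunE.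
rewrite (big_fprod 1 +%R) -(bigA_distr_big_dep _ (fun i => untag 0 (G i))).
apply: eq_bigr => i _; rewrite -(big_tag (fun i x => G i x)).
by apply: eq_bigr => x _; rewrite ffunE.
Qed.

Lemma sum_dffun_prod_cond (P : forall i, pred (T_ i)) (F : forall i, T_ i -> R) :
  \sum_(f : {dffun forall i, T_ i} | [forall i, P i (f i)]) \prod_i F i (f i) =
  \prod_i \sum_(x | P i x) F i x.
Proof.
transitivity (\sum_(f : {dffun forall i, T_ i}) \prod_i
                (if P i (f i) then F i (f i) else 0)).
  rewrite big_mkcond; apply: eq_bigr => f _.
  case: forallP => [fP | /forallP/forallPn[i /negbTE Pi]].
    by apply: eq_bigr => i _; rewrite fP.
  by rewrite (bigD1 i) //= Pi mul0r.
rewrite (sum_dffun_prod (fun i x => if P i x then F i x else 0)).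
by apply: eq_bigr => i _; rewrite -big_mkcond.
Qed.

End DependentProducts.

Lemma predn_exp_mul_exp_inj (q y x y' x' : nat) : (2 < q)%N ->
  (q.-1 ^ y * q ^ x = q.-1 ^ y' * q ^ x')%N -> x = x' /\ y = y'.
Proof.
move=> q_gt2; wlog le_xx' : x y x' y' / (x <= x')%N.
  move=> wlog_le E; case: (leqP x x') => [|/ltnW] le_x; first exact: wlog_le.
  by have [-> ->] := wlog_le _ _ _ _ le_x (esym E).
rewrite -(subnKC le_xx') expnD mulnA mulnAC => /eqP.
rewrite eqn_pmul2r ?expn_gt0 ?(ltn_trans _ q_gt2) // => /eqP E.
have q1_gt1 : (1 < q.-1)%N by rewrite -subn1 ltn_subRL.
case: (posnP (x' - x)) => [d0 | d_gt0].
  by move: E; rewrite d0 muln1 addn0 => /(expnI q1_gt1).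
have q_dvd : (q %| q.-1 ^ y)%N by rewrite E dvdn_mull // dvdn_exp.
have q_cop : coprime q (q.-1 ^ y) by rewrite coprimeXr // coprimenP // (ltn_trans _ q_gt2).
by move: (coprime_dvdr q_dvd q_cop); rewrite /coprime gcdnn => /eqP q1; rewrite q1 in q_gt2.
Qed.

Section CharacterSums.
Variables (G : finZmodType) (f : G -> algC).
Hypothesis fP : is_character f.

Lemma sum_character_nontrivial a : f a != 1 -> \sum_x f x = 0.
Proof.
move=> fa; have [_ fD] := fP.
have : \sum_x f x = f a * \sum_x f x.
  rewrite mulr_sumr (reindex_inj (addrI a)) /=.
  by apply: eq_bigr => x _; rewrite fD.
move/eqP; rewrite -subr_eq0 -{1}[\sum_x f x]mul1r -mulrBl mulf_eq0 subr_eq0.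
by rewrite eq_sym (negbTE fa) => /eqP.
Qed.

Lemma sum_character : \sum_x f x = if [exists x, f x != 1] then 0 else #|G|%:R.
Proof.
case: existsP => [[a fa] | fT]; first exact: sum_character_nontrivial fa.
rewrite -sumr_const; apply: eq_bigr => x _.
by apply/eqP/negPn/negP => fx; apply: fT; exists x.
Qed.

Lemma sum_character_nonzero : \sum_(x | x != 0) f x = \sum_x f x - 1.
Proof. by rewrite [in RHS](bigD1 0) //= fP.1 [1 + _]addrC addrK. Qed.

End CharacterSums.

Section Poset.
Variables (Omega : finType) (le : rel Omega).
Hypotheses (le_refl : reflexive le) (le_anti : antisymmetric le)
  (le_trans : transitive le).

Definition maximals (I : {set Omega}) : {set Omega} :=
  [set i in I | [forall k in I, le i k ==> (k == i)]].

Lemma maximalsP (I : {set Omega}) i :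
  reflect (i \in I /\ forall k, k \in I -> le i k -> k = i) (i \in maximals I).
Proof.
rewrite inE; apply: (iffP andP) => [[iI /forallP iM] | [iI iM]]; split => //.
  by move=> k kI lik; have := iM k; rewrite kI lik => /eqP.
by apply/forallP => k; apply/implyP => kI; apply/implyP => /(iM k kI) ->.
Qed.

Lemma maximals_sub (I : {set Omega}) : maximals I \subset I.
Proof. by apply/subsetP => i /maximalsP[]. Qed.

Lemma exists_maximal_above (I : {set Omega}) a :
  a \in I -> exists2 m, m \in maximals I & le a m.
Proof.
move=> aI; have Pa : (a \in I) && le a a by rewrite aI le_refl.
have [m /andP[mI lam] m_max] :=
  @arg_maxnP Omega a (fun m => (m \in I) && le a m) (fun m => #|[set x | le x m]|) Pa.
exists m => //; apply/maximalsP; split => // k kI lmk.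
apply/eqP/negPn/negP => km.
have Pk : (k \in I) && le a k by rewrite kI (le_trans lam lmk).
have := m_max k Pk; apply/negP; rewrite -ltnNge; apply: proper_card.
rewrite properE; apply/andP; split.
  by apply/subsetP => x; rewrite !inE => /le_trans; apply.
apply/subsetPn; exists k; rewrite !inE ?le_refl //.
by apply: contra km => lkm; apply/eqP/le_anti; rewrite lkm lmk.
Qed.

Definition down_closed (I : {set Omega}) := forall a c, c \in I -> le a c -> a \in I.

Lemma ideal_down_closed (B : {set Omega}) : down_closed (ideal le B).
Proof.
move=> a c; rewrite !inE => /existsP[b /andP[bB lcb]] lac.
by apply/existsP; exists b; rewrite bB (le_trans lac lcb).
Qed.

Lemma sub_ideal (B : {set Omega}) : B \subset ideal le B.
Proof. by apply/subsetP => b bB; rewrite inE; apply/existsP; exists b; rewrite bB le_refl. Qed.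

(* The largest down-set in which every element of [T] is maximal. *)
Definition floor_ideal (T : {set Omega}) : {set Omega} :=
  [set a | [forall t in T, le t a ==> (t == a)]].

Variable T : {set Omega}.
Local Notation F := (floor_ideal T).

Lemma floor_idealP a : reflect (forall t, t \in T -> le t a -> t = a) (a \in F).
Proof.
rewrite inE; apply: (iffP forallP) => [aF t tT lta | aF t].
  by have := aF t; rewrite tT lta => /eqP.
by apply/implyP => tT; apply/implyP => /(aF t tT) ->.
Qed.

Lemma floor_ideal_down_closed : down_closed F.
Proof.
move=> a c /floor_idealP cF lac; apply/floor_idealP => t tT lta.
have tc := cF t tT (le_trans lta lac); rewrite tc in lta *.
by apply/le_anti; rewrite lta lac.
Qed.

Lemma floor_ideal_maximal i : i \in F -> i \in T -> i \in maximals F.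
Proof.
by move=> iF iT; apply/maximalsP; split => // k /floor_idealP kF /(kF i iT).
Qed.

Lemma setC_ideal_dual : ~: ideal (dual_rel le) T = F :\: T.
Proof.
apply/setP => a; rewrite in_setD in_setC [a \in ideal _ _]inE negb_exists.
apply/forallP/andP.
  move=> aU; split; first by have := aU a; rewrite /dual_rel le_refl andbT.
  by apply/floor_idealP => t tT lta; have := aU t; rewrite tT /dual_rel lta.
case=> aT /floor_idealP aF t; apply/negP => /andP[tT lta].
by move: aT; rewrite -(aF t tT lta) tT.
Qed.

Lemma card_ideal_dual :
  (#|ideal (dual_rel le) T| + (#|F :\: maximals F| + #|maximals F :\: T|))%N
  = #|Omega|.
Proof.
have split_FT : (F :\: T) :\: maximals F = F :\: maximals F /\
                (F :\: T) :&: maximals F = maximals F :\: T.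
  split; apply/setP => i; rewrite ?in_setI !in_setD;
  have := subsetP (maximals_sub F) i; have := @floor_ideal_maximal i;
  by case: (i \in maximals F); case: (i \in T); case: (i \in F) => //= h1 h2;
    first [by move: (h1 isT isT) | by move: (h2 isT)].
rewrite -(cardsC (ideal (dual_rel le) T)) setC_ideal_dual; congr (_ + _)%N.
by rewrite -(cardsID (maximals F) (F :\: T)) addnC (proj1 split_FT) (proj2 split_FT).
Qed.

End Poset.

Section ClassSums.
Variables (Omega : finType) (le : rel Omega).
Hypotheses (le_refl : reflexive le) (le_anti : antisymmetric le)
  (le_trans : transitive le).
Variables (H : Omega -> finZmodType) (chi : chartuple H).
Arguments chi : clear implicits.
Hypothesis chiP : is_chartuple chi.

Local Notation T := (char_supp chi).
Local Notation F := (floor_ideal le T).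
Local Notation maximals := (maximals le).

Lemma eq_ideal_supp (I : {set Omega}) (b : codeword H) : down_closed le I ->
  (ideal le (supp b) == I) =
  [forall i, ((i \in maximals I) ==> (b i != 0)) && ((i \notin I) ==> (b i == 0))].
Proof.
move=> dI; apply/eqP/forallP => [<- i | bI].
  apply/andP; split; apply/implyP.
    case/maximalsP => /[dup] iI; rewrite inE => /existsP[s /andP[bs lis]] iM.
    have sI : s \in ideal le (supp b) by rewrite (subsetP (sub_ideal le_refl _)).
    by move: bs; rewrite -(iM s sI lis) inE.
  by apply: contraR => bi; rewrite (subsetP (sub_ideal le_refl _)) // inE.
apply/setP => a; apply/idP/idP.
  rewrite inE => /existsP[s /andP[bs las]]; apply: dI las.
  apply: contraLR bs => sI; have /andP[_ /implyP/(_ sI)/eqP bs0] := bI s.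
  by rewrite inE bs0 eqxx.
move=> /(exists_maximal_above le_refl le_anti le_trans)[m mM lam].
rewrite inE; apply/existsP; exists m; rewrite lam andbT inE.
by have /andP[/implyP/(_ mM)] := bI m.
Qed.

Definition class_sum (I : {set Omega}) :=
  \sum_(b : codeword H | ideal le (supp b) == I) char_eval chi b.

Definition weight_sum k := \sum_(b : codeword H | wtP le b == k) char_eval chi b.

Lemma class_sum_prod (I : {set Omega}) : down_closed le I ->
  class_sum I = \prod_i
    \sum_(x : H i | ((i \in maximals I) ==> (x != 0)) && ((i \notin I) ==> (x == 0))) chi i x.
Proof.
move=> dI; rewrite /class_sum (eq_bigl _ _ (fun b => eq_ideal_supp b dI)).
exact: (sum_dffun_prod_cond
  (fun i x => ((i \in maximals I) ==> (x != 0)) && ((i \notin I) ==> (x == 0)))).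
Qed.

(* A point [t] of [T] strictly below a point of [I] is not maximal in [I], so
   its factor is the full sum of the nontrivial character [chi t]. *)
Lemma class_sum_eq0 (I : {set Omega}) : ~~ (I \subset F) -> class_sum I = 0.
Proof.
case/subsetPn => a aI; rewrite inE negb_forall => /existsP[t].
rewrite !negb_imply => /and3P[tT lta ta].
case: (pickP (fun b : codeword H => ideal le (supp b) == I)) => [b /eqP Ib | I_empty];
  last by rewrite /class_sum big_pred0.
have dI : down_closed le I by rewrite -Ib; apply: ideal_down_closed.
have tM : t \notin maximals I.
  by apply: contra ta => /maximalsP[_ /(_ a aI lta) ->].
rewrite class_sum_prod //; apply/eqP/prodf_eq0; exists t => //.
rewrite (negbTE tM) (dI t a aI lta) /= (sum_character (chiP t)).
by move: tT; rewrite inE => ->.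
Qed.

Lemma weight_sum_classes k :
  weight_sum k = \sum_(I : {set Omega} | #|I| == k) class_sum I.
Proof.
rewrite /weight_sum (partition_big (fun b : codeword H => ideal le (supp b))
  (fun I : {set Omega} => #|I| == k)) => [|b //].
apply: eq_bigr => I /eqP cI; apply: eq_bigl => b.
by case: (ideal le (supp b) =P I) => [Ib|]; rewrite ?andbF // /wtP Ib cI eqxx.
Qed.

Lemma class_sum_large_eq0 (I : {set Omega}) :
  (#|F| <= #|I|)%N -> I != F -> class_sum I = 0.
Proof.
move=> FI IF; apply: class_sum_eq0; apply: contra IF => IF.
by rewrite eqEcard IF FI.
Qed.

Lemma weight_sum_eq0 k : (#|F| < k)%N -> weight_sum k = 0.
Proof.
move=> Fk; rewrite weight_sum_classes big1 // => I /eqP cI.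
apply: class_sum_large_eq0; first by rewrite cI ltnW.
by apply: contraTneq Fk => IF; rewrite -cI IF ltnn.
Qed.

Lemma weight_sum_floor : weight_sum #|F| = class_sum F.
Proof.
rewrite weight_sum_classes (bigD1 F) //= big1 ?addr0 // => I /andP[/eqP cI IF].
by apply: class_sum_large_eq0; rewrite ?cI.
Qed.

Variable q : nat.
Hypothesis card_H : forall i, #|H i| = q.

Lemma norm_floor_factor i :
  `|\sum_(x : H i | ((i \in maximals F) ==> (x != 0)) && ((i \notin F) ==> (x == 0)))
      chi i x|
  = q.-1%:R ^+ (i \in maximals F :\: T) * q%:R ^+ (i \in F :\: maximals F).
Proof.
have q_gt0 : (0 < q)%N by rewrite -(card_H i); apply/card_gt0P; exists 0.
have suppE : [exists x, chi i x != 1] = (i \in T) by rewrite inE.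
rewrite !in_setD; have [iM | iM] /= := boolP (i \in maximals F).
  have iF : i \in F by apply: (subsetP (maximals_sub _ _)) iM.
  rewrite iF /=; under eq_bigl do rewrite andbT.
  rewrite (sum_character_nonzero (chiP i)) (sum_character (chiP i)) suppE.
  case: (i \in T) => /=; first by rewrite sub0r normrN normr1 mulr1.
  by rewrite card_H -(natrB _ q_gt0) normr_nat subn1 mulr1.
case: (boolP (i \in F)) => iF /=.
  have iT : i \notin T by apply: contra iM; apply: floor_ideal_maximal.
  by rewrite (sum_character (chiP i)) suppE (negbTE iT) card_H normr_nat mul1r.
by rewrite big_pred1_eq (chiP i).1 andbF normr1 mulr1.
Qed.

Lemma norm_class_sum_floor :
  `|class_sum F| = (q.-1 ^ #|maximals F :\: T| * q ^ #|F :\: maximals F|)%:R.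
Proof.
rewrite class_sum_prod ?normr_prod; last exact: floor_ideal_down_closed.
under eq_bigr do rewrite norm_floor_factor.
have sum_mem (A : {set Omega}) : (\sum_i (i \in A))%N = #|A|.
  by rewrite -sum1_card [RHS]big_mkcond; apply: eq_bigr => i _; case: (i \in A).
by rewrite big_split /= !prodrXr !sum_mem natrM !natrX.
Qed.

Lemma weight_sum_floor_neq0 : (1 < q)%N -> weight_sum #|F| != 0.
Proof.
move=> q_gt1; rewrite weight_sum_floor -normr_eq0 norm_class_sum_floor.
by rewrite pnatr_eq0 -lt0n muln_gt0 !expn_gt0 ltn_predRL q_gt1 ltnW.
Qed.

End ClassSums.

Theorem theorem2p2 (Omega : finType) (H : Omega -> finZmodType) (le : rel Omega)
  (Hposet : is_poset le)
  (Hcard : forall i l : Omega, #|H i| = #|H l|)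
  (Hge3 : forall i : Omega, (3 <= #|H i|)%N)
  (chi psi : chartuple H) :
  is_chartuple chi -> is_chartuple psi ->
  (forall k : nat,
     \sum_(b : codeword H | wtP le b == k) char_eval chi b =
     \sum_(b : codeword H | wtP le b == k) char_eval psi b) ->
  wtPbar_char le chi = wtPbar_char le psi.
Proof.
move=> chiP psiP same_sums; have [le_refl [le_anti le_trans]] := Hposet.
have same_W k : weight_sum le chi k = weight_sum le psi k := same_sums k.
case: (pickP (@predT Omega)) => [i0 _ | Omega0]; last first.
  by rewrite /wtPbar_char !eq_card0 // => i; have := Omega0 i.
set q := #|H i0|; have card_H i : #|H i| = q by apply: Hcard.
have q_gt2 : (2 < q)%N := Hge3 i0.
pose F (c : chartuple H) := floor_ideal le (char_supp c).
pose x (c : chartuple H) := #|F c :\: maximals le (F c)|.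
pose y (c : chartuple H) := #|maximals le (F c) :\: char_supp c|.
have norm_top (c : chartuple H) : is_chartuple c ->
    `|weight_sum le c #|F c| | = (q.-1 ^ y c * q ^ x c)%:R.
  by move=> cP; rewrite weight_sum_floor // (norm_class_sum_floor _ _ _ cP card_H).
have top_neq0 (c : chartuple H) : is_chartuple c -> weight_sum le c #|F c| != 0.
  by move=> cP; apply: (weight_sum_floor_neq0 _ _ _ cP card_H (ltnW q_gt2)).
have eq_floor : #|F chi| = #|F psi|.
  case: (ltngtP #|F chi| #|F psi|) => // lt.
    by move: (top_neq0 psi psiP); rewrite -same_W weight_sum_eq0 ?eqxx.
  by move: (top_neq0 chi chiP); rewrite same_W weight_sum_eq0 ?eqxx.
have [ex ey] : x chi = x psi /\ y chi = y psi.
  apply: (predn_exp_mul_exp_inj q_gt2); apply/eqP.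
  by rewrite -(eqr_nat algC) -(norm_top chi chiP) -(norm_top psi psiP) same_W eq_floor.
apply: (@addIn (x chi + y chi)); rewrite {2}ex {2}ey.
by rewrite !(card_ideal_dual le_refl).
Qed.
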